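(* Let $n\ge 1$ and let $\mathcal{H}=(\mathbb{C}^3)^{\otimes n}$ with the sector projectors $\Pi_{\bm i}$ and trace-normalized projectors $\widetilde{\Pi}_{\bm i}$, $\bm i\in\{c,l\}^n$, as in the context. Define the twirling projector $\bar{\mathcal{P}}$ on linear operators $\rho$ on $\mathcal{H}$ by $\bar{\mathcal{P}}(\rho)=\sum_{\bm i\in\{c,l\}^n}\operatorname{tr}(\Pi_{\bm i}\rho)\,\widetilde{\Pi}_{\bm i}$. Then $$\bar{\mathcal{P}}=\frac{1}{|\mathbb{P}_n|}\sum_{P\in\mathbb{P}_n}\mathcal{P},$$ i.e. for every quantum state $\rho$ on $\mathcal{H}$, $\frac{1}{|\mathbb{P}_n|}\sum_{P\in\mathbb{P}_n}\mathcal{P}(\rho)=\sum_{\bm i}\operatorname{tr}(\Pi_{\bm i}\rho)\widetilde{\Pi}_{\bm i}$.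
   Context: A single qubit with leakage is the Hilbert space $\mathbb{C}^3$ with orthonormal basis $\{|0\rangle,|1\rangle,|2\rangle\}$; its computational subspace is $\operatorname{span}\{|0\rangle,|1\rangle\}$ with projector $\Pi_c=|0\rangle\langle 0|+|1\rangle\langle 1|$ and its leakage subspace is $\operatorname{span}\{|2\rangle\}$ with projector $\Pi_l=|2\rangle\langle 2|$. For $n$ qubits, $\mathcal{H}=(\mathbb{C}^3)^{\otimes n}$ and for $\bm i=(i_1,\dots,i_n)\in\{c,l\}^n$, $\Pi_{\bm i}=\bigotimes_{k=1}^n\Pi_{i_k}$ (the factor on qubit $k$ is $\Pi_c$ if $i_k=c$ and $\Pi_l$ if $i_k=l$), $\mathcal{H}_{\bm i}$ is its range, and $\widetilde{\Pi}_{\bm i}=\Pi_{\bm i}/\dim(\mathcal{H}_{\bm i})$. The single-qubit Pauli group is $\mathbb{P}=\{\pm1,\pm \mathrm{i}\}\times\{I,X,Y,Z\}$ (16 elements, $X,Y,Z$ the $2\times2$ Pauli matrices) and $\mathbb{P}_n=\mathbb{P}^{\times n}$. For $U\in\mathbb{P}$, its channel on $\mathbb{C}^3$ is $\mathcal{P}_U(\rho)=(U\oplus 1)\rho(U\oplus 1)^\dagger$, where $U\oplus 1$ acts as $U$ on $\operatorname{span}\{|0\rangle,|1\rangle\}$ and as the identity on $|2\rangle$. For $P=(P_1,\dots,P_n)\in\mathbb{P}_n$, $\mathcal{P}=\bigotimes_{k}\mathcal{P}_{P_k}$. *)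

From mathcomp Require Import all_boot all_order all_algebra all_field.
Set Implicit Arguments. Unset Strict Implicit. Unset Printing Implicit Defensive.
Import Order.TTheory GRing.Theory Num.Theory.
Local Open Scope ring_scope.

(* Computational basis of (C^3)^{⊗n}: a basis vector |x_1 ... x_n> is a
   function x : 'I_n -> 'I_3. *)
Definition basis (n : nat) := {ffun 'I_n -> 'I_3}.

(* Linear operators on H = (C^3)^{⊗n}, given by their matrix entries
   <x| A |y> in the computational basis. *)
Definition op (n : nat) := basis n -> basis n -> algC.

Definition opmul n (A B : op n) : op n :=
  fun x y => \sum_(z : basis n) A x z * B z y.
Definition opadj n (A : op n) : op n := fun x y => (A y x)^*.
Definition optr n (A : op n) : algC := \sum_(x : basis n) A x x.
Definition opscale n (a : algC) (A : op n) : op n := fun x y => a * A x y.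

Definition tens n (M : 'I_n -> 'M[algC]_3) : op n :=
  fun x y => \prod_(k < n) M k (x k) (y k).

(* Single-qubit Pauli matrices: 0 = I, 1 = X, 2 = Y, 3 = Z. *)
Definition pauli (a : 'I_4) : 'M[algC]_2 :=
  \matrix_(i < 2, j < 2)
    match val a with
    | 0 => (i == j)%:R
    | 1 => (i != j)%:R
    | 2 => if i == j then 0 else if (val i == 0)%N then - 'i else 'i
    | _ => if i == j then (if (val i == 0)%N then 1 else -1) else 0
    end.

(* Single-qubit Pauli group P = {±1, ±i} × {I,X,Y,Z}: an element (k, a)
   stands for the matrix i^k * pauli a (16 elements). *)
Definition Pauli1 := ('I_4 * 'I_4)%type.
Definition pauli_mat (U : Pauli1) : 'M[algC]_2 := ('i ^+ val U.1) *: pauli U.2.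

(* U ⊕ 1 on C^3 = span{|0>,|1>} ⊕ span{|2>}. *)
Definition dsum1 (U : 'M[algC]_2) : 'M[algC]_3 :=
  \matrix_(i < 3, j < 3)
    if ((val i < 2) && (val j < 2))%N then U (inord i) (inord j)
    else (i == j)%:R.

Definition Pauli (n : nat) := {ffun 'I_n -> Pauli1}.

Definition pauli_channel n (P : Pauli n) (rho : op n) : op n :=
  let V := tens (fun k => dsum1 (pauli_mat (P k))) in
  opmul (opmul V rho) (opadj V).

(* Single-qutrit projectors Π_c, Π_l. Sector labels: false = c, true = l. *)
Definition Pic : 'M[algC]_3 := \matrix_(i < 3, j < 3) ((i == j) && (val i < 2)%N)%:R.
Definition Pil : 'M[algC]_3 := \matrix_(i < 3, j < 3) ((i == j) && (val i == 2)%N)%:R.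

Definition sector (n : nat) := {ffun 'I_n -> bool}.

Definition Proj n (s : sector n) : op n :=
  tens (fun k => if s k then Pil else Pic).

(* dim H_s = 2^(number of computational factors) * 1^(number of leaked ones) *)
Definition sector_dim n (s : sector n) : nat := 2 ^ #|[set k | ~~ s k]|.

Definition ProjN n (s : sector n) : op n :=
  opscale ((sector_dim s)%:R^-1) (Proj s).

Definition twirl n (rho : op n) : op n :=
  fun x y => \sum_(s : sector n) optr (opmul (Proj s) rho) * ProjN s x y.

From mathcomp Require Import all_boot all_order all_algebra all_field.
From mathcomp Require Import ring.
Import GRing.Theory Num.Theory.
Local Open Scope ring_scope.

(* Both sides are linear in rho and factor as tensor products over the n
   qutrits, so it suffices to compare, on a single site, the coefficient of
   rho z w in entry (x, y): the average over the 16 matrices U of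
   (U ⊕ 1)_{ac} conj((U ⊕ 1)_{bd}) against Σ_l Π_l(d,c) Π_l(a,b) / dim H_l.
   Averaging the global phase i^k kills the terms that mix the computational
   and the leakage block, U ⊕ 1 is the identity on the leakage block, and on
   the computational block Pauli completeness
   Σ_s σ_s(a,c) σ_s(d,b) = 2 δ_ab δ_cd produces the weight 1/2 of Π̃_c. *)

Lemma pauli_hermitian (s : 'I_4) (a b : 'I_2) : (pauli s a b)^* = pauli s b a.
Proof.
have conjCNi : (- 'i)^* = 'i :> algC by rewrite -[in RHS](conjCK 'i) conjCi.
rewrite !mxE.
by case: s => [[|[|[|[|?]]]] ?] //; case: a => [[|[|?]] ?] //;
  case: b => [[|[|?]] ?] //; rewrite /= ?(rmorph0, rmorph1, rmorphN1, conjCi, conjCNi).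
Qed.

Lemma pauli_completeness (a b c d : 'I_2) :
  \sum_(s < 4) pauli s a c * pauli s d b = 2 * ((a == b) && (c == d))%:R.
Proof.
have mulCii : 'i * 'i = -1 :> algC by rewrite -expr2 sqrCi.
rewrite !big_ord_recr big_ord0 /= !mxE /=.
by case: a => [[|[|?]] ?] //; case: b => [[|[|?]] ?] //;
  case: c => [[|[|?]] ?] //; case: d => [[|[|?]] ?] //=;
  rewrite ?(mulrN, mulNr, opprK, mulCii); ring.
Qed.

Lemma sum_powCi : \sum_(k < 4) 'i ^+ k = 0 :> algC.
Proof.
have i2 : 'i ^+ 2 = -1 :> algC by exact: sqrCi.
have i3 : 'i ^+ 3 = - 'i :> algC by rewrite exprS i2 mulrN1.
by rewrite !big_ord_recr big_ord0 /= add0r expr0 expr1 i2 i3; ring.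
Qed.

Lemma powCi_mul_conj (k : nat) : 'i ^+ k * ('i ^+ k)^* = 1 :> algC.
Proof. by rewrite -normCK normrX normCi !expr1n. Qed.

Lemma phase_cancel (k : nat) (u v : algC) :
  'i ^+ k * u * ('i ^+ k * v)^* = u * v^*.
Proof.
have conjCM (z w : algC) : (z * w)^* = z^* * w^* by exact: rmorphM.
by rewrite conjCM mulrACA powCi_mul_conj mul1r.
Qed.

Lemma inord_eq (m n : nat) (a b : 'I_m) : (a <= n)%N -> (b <= n)%N ->
  (inord a == inord b :> 'I_n.+1) = (a == b).
Proof.
move=> an bn; apply/eqP/eqP => [/(congr1 val)|-> //].
by rewrite /= !inordK // => /val_inj.
Qed.

Lemma sum_Pauli1 (F : Pauli1 -> algC) :
  \sum_(U : Pauli1) F U = \sum_(k < 4) \sum_(s < 4) F (k, s).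
Proof. by rewrite pair_bigA; apply: eq_bigr => -[]. Qed.

Lemma dsum1_pauli_matE (U : Pauli1) (a c : 'I_3) :
  dsum1 (pauli_mat U) a c =
  if (a < 2)%N && (c < 2)%N then 'i ^+ U.1 * pauli U.2 (inord a) (inord c)
  else (a == c)%:R.
Proof. by rewrite mxE; case: ifP; rewrite ?mxE. Qed.

Definition twirl_coef (a b c d : 'I_3) : algC :=
  if (a < 2)%N && (c < 2)%N then
    if (b < 2)%N && (d < 2)%N then 2^-1 * ((a == b) && (c == d))%:R else 0
  else if (b < 2)%N && (d < 2)%N then 0 else ((a == c) && (b == d))%:R.

Lemma pauli_avg_site (a b c d : 'I_3) :
  16^-1 * \sum_(U : Pauli1) dsum1 (pauli_mat U) a c * (dsum1 (pauli_mat U) b d)^*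
  = twirl_coef a b c d.
Proof.
under eq_bigr => U _ do rewrite !dsum1_pauli_matE.
rewrite sum_Pauli1 /twirl_coef /=.
case hac: ((a < 2) && (c < 2))%N; case hbd: ((b < 2) && (d < 2))%N.
- move: hac hbd => /andP[a2 c2] /andP[b2 d2].
  under eq_bigr => k _ do under eq_bigr => s _ do
    rewrite phase_cancel pauli_hermitian.
  rewrite sumr_const card_ord pauli_completeness !inord_eq //.
  by rewrite -mulr_natr; field.
- rewrite exchange_big big1 ?mulr0 // => s _.
  by under eq_bigr do rewrite -mulrA; rewrite -big_distrl /= sum_powCi mul0r.
- rewrite exchange_big big1 ?mulr0 // => s _.
  by rewrite -big_distrr /= -rmorph_sum -big_distrl /= sum_powCi mul0r rmorph0 mulr0.
- rewrite conjC_nat !sumr_const !card_ord -natrM mulnb.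
  by rewrite -mulrnA -mulr_natr; field.
Qed.

Definition sector_proj (l : bool) : 'M[algC]_3 := if l then Pil else Pic.
Definition sector_weight (l : bool) : algC := if l then 1 else 2^-1.

Lemma sector_avg_site (a b c d : 'I_3) :
  \sum_(l : bool) sector_proj l d c * sector_proj l a b * sector_weight l
  = twirl_coef a b c d.
Proof.
rewrite big_bool /twirl_coef /= !mxE.
by case: a => [[|[|[|?]]] ?] //; case: b => [[|[|[|?]]] ?] //;
  case: c => [[|[|[|?]]] ?] //; case: d => [[|[|[|?]]] ?] //=;
  rewrite ?(mul0r, mulr0, mul1r, mulr1, add0r, addr0).
Qed.

Lemma conj_tensE n (M : 'I_n -> 'M[algC]_3) (rho : op n) (x y : basis n) :
  opmul (opmul (tens M) rho) (opadj (tens M)) x y =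
  \sum_(z : basis n) \sum_(w : basis n)
    rho z w * \prod_(k < n) (M k (x k) (z k) * (M k (y k) (w k))^*).
Proof.
rewrite /opmul /opadj /tens.
under eq_bigr => w _ do rewrite big_distrl /=.
rewrite exchange_big /=; apply: eq_bigr => z _; apply: eq_bigr => w _.
by rewrite rmorph_prod big_split /= mulrAC mulrC.
Qed.

Lemma pauli_channelE n (P : Pauli n) (rho : op n) (x y : basis n) :
  pauli_channel P rho x y =
  \sum_(z : basis n) \sum_(w : basis n) rho z w * \prod_(k < n)
    (dsum1 (pauli_mat (P k)) (x k) (z k) * (dsum1 (pauli_mat (P k)) (y k) (w k))^*).
Proof. exact: conj_tensE. Qed.

Lemma optr_mul_tensE n (M : 'I_n -> 'M[algC]_3) (rho : op n) :
  optr (opmul (tens M) rho) =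
  \sum_(z : basis n) \sum_(w : basis n) rho z w * \prod_(k < n) M k (w k) (z k).
Proof.
rewrite /optr /opmul exchange_big /=.
by apply: eq_bigr => z _; apply: eq_bigr => w _; rewrite mulrC.
Qed.

Lemma inv_sector_dim n (s : sector n) :
  (sector_dim s)%:R^-1 = \prod_(k < n) sector_weight (s k).
Proof.
rewrite /sector_dim natrX -exprVn (bigID s) /= big1 ?mul1r; last by move=> k ->.
rewrite (eq_bigr (fun=> 2^-1)); last by move=> k /negbTE ->.
rewrite (eq_bigl (fun k => k \in [set k | ~~ s k])) ?prodr_const //.
by move=> k; rewrite inE.
Qed.

Lemma twirlE n (rho : op n) (x y : basis n) :
  twirl rho x y = \sum_(z : basis n) \sum_(w : basis n) rho z w *
    \sum_(s : sector n) \prod_(k < n)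
      (sector_proj (s k) (w k) (z k) * sector_proj (s k) (x k) (y k) * sector_weight (s k)).
Proof.
rewrite /twirl /ProjN /opscale.
under eq_bigr => s _ do rewrite optr_mul_tensE big_distrl.
rewrite exchange_big; apply: eq_bigr => z _.
under eq_bigr => s _ do rewrite big_distrl.
rewrite exchange_big; apply: eq_bigr => w _.
rewrite mulr_sumr; apply: eq_bigr => s _.
by rewrite inv_sector_dim /Proj /tens !big_split /=; ring.
Qed.

Theorem lemma1 (n : nat) (hn : (1 <= n)%N) (rho : op n) (x y : basis n) :
  (#|{: Pauli n}|%:R)^-1 * (\sum_(P : Pauli n) pauli_channel P rho x y)
  = twirl rho x y.
Proof.
have card_Pauli : #|{: Pauli n}|%:R^-1 = \prod_(k < n) 16^-1 :> algC.
  by rewrite card_ffun card_prod !card_ord prodr_const card_ord natrX exprVn.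
under eq_bigr => P _ do rewrite pauli_channelE.
rewrite card_Pauli twirlE exchange_big mulr_sumr; apply: eq_bigr => z _.
rewrite exchange_big mulr_sumr; apply: eq_bigr => w _.
rewrite -mulr_sumr mulrCA; congr (_ * _).
rewrite -(bigA_distr_bigA (fun k (U : Pauli1) =>
  dsum1 (pauli_mat U) (x k) (z k) * (dsum1 (pauli_mat U) (y k) (w k))^*)).
rewrite -(bigA_distr_bigA (fun k l =>
  sector_proj l (w k) (z k) * sector_proj l (x k) (y k) * sector_weight l)).
by rewrite -big_split /=; apply: eq_bigr => k _; rewrite pauli_avg_site sector_avg_site.
Qed.
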